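(* Let $G=(V,w,m)$ be a locally finite weighted graph, let $x,z\in V$ with $d(x,z)=2$, and let $f:V\to\mathbb R$ satisfy $$\frac{f(x)+f(z)}2=\frac{\sum_{y:\,x\sim y\sim z}f(y)\,w(x,y)w(y,z)/m(y)}{\sum_{y:\,x\sim y\sim z}w(x,y)w(y,z)/m(y)}.$$ Then for every $r\neq0$, $\Gamma_2f(x)<\Gamma_2\big(f+r\mathbf 1_{\{z\}}\big)(x)$.
   Context: A weighted graph is $G=(V,w,m)$ with $V$ countable, $w:V\times V\to[0,\infty)$ symmetric with $w(x,x)=0$, $m:V\to(0,\infty)$; $x\sim y$ iff $w(x,y)>0$. Laplacian $\Delta f(x)=\frac1{m(x)}\sum_yw(x,y)(f(y)-f(x))$. $d$ is the combinatorial distance. $2\Gamma(f,g)=\Delta(fg)-f\Delta g-g\Delta f$, $2\Gamma_2(f,g)=\Delta\Gamma(f,g)-\Gamma(f,\Delta g)-\Gamma(g,\Delta f)$, $\Gamma_2f=\Gamma_2(f,f)$. $\mathbf 1_{\{z\}}$ is the indicator function of $\{z\}$. *)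

From Stdlib Require Import Reals List Lra.
Import ListNotations.
Open Scope R_scope.

(* Local finiteness is witnessed by an explicit duplicate-free list of neighbours
   of each vertex; this list is determined by w up to permutation. *)
Record wgraph := {
  V :> Type;
  enc : V -> nat;                      (* countability: injection into nat *)
  enc_inj : forall x y, enc x = enc y -> x = y;
  w : V -> V -> R;
  m : V -> R;
  w_nonneg : forall x y, 0 <= w x y;
  w_sym : forall x y, w x y = w y x;
  w_diag : forall x, w x x = 0;
  m_pos : forall x, 0 < m x;
  nbrs : V -> list V;
  nbrs_nodup : forall x, NoDup (nbrs x);
  nbrs_spec : forall x y, In y (nbrs x) <-> 0 < w x y
}.

Definition sum_list {T : Type} (l : list T) (g : T -> R) : R :=
  fold_right (fun y acc => g y + acc) 0 l.

Section Ops.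
Variable G : wgraph.

Definition adj (x y : G) : Prop := 0 < w G x y.

Definition Lap (f : G -> R) (x : G) : R :=
  / m G x * sum_list (nbrs G x) (fun y => w G x y * (f y - f x)).

Definition Gam (f g : G -> R) (x : G) : R :=
  / 2 * (Lap (fun y => f y * g y) x - f x * Lap g x - g x * Lap f x).

Definition Gam2 (f g : G -> R) (x : G) : R :=
  / 2 * (Lap (Gam f g) x - Gam f (Lap g) x - Gam g (Lap f) x).

Definition Gam2_diag (f : G -> R) (x : G) : R := Gam2 f f x.

Inductive walk : G -> G -> nat -> Prop :=
| walk_nil : forall x, walk x x 0
| walk_cons : forall x y z n, adj x y -> walk y z n -> walk x z (S n).

Definition dist_eq (x z : G) (n : nat) : Prop :=
  walk x z n /\ forall k, (k < n)%nat -> ~ walk x z k.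

Definition indic (z : G) (y : G) : R :=
  if Nat.eq_dec (enc G y) (enc G z) then 1 else 0.

Definition sum_common (x z : G) (g : G -> R) : R :=
  sum_list (nbrs G x)
    (fun y => if Rlt_dec 0 (w G y z) then g y else 0).

End Ops.

(* Γ₂ is a symmetric bilinear form, so with g = 1_{z},
     Γ₂(f + r g)(x) = Γ₂f(x) + 2r Γ₂(f,g)(x) + r² Γ₂g(x).
   Since z lies outside the closed unit ball of x, only the two-step paths
   x ~ y ~ z contribute, and with S = Σ_y w(x,y)w(y,z)/m(y) and
   T = Σ_y f(y) w(x,y)w(y,z)/m(y) one computes
     4 m(x) Γ₂g(x) = S > 0,     4 m(x) Γ₂(f,g)(x) = (f(x) + f(z)) S - 2T.
   The hypothesis says exactly that the cross term vanishes, leaving the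
   positive quadratic term r² Γ₂g(x). *)
From Stdlib Require Import Reals Lra List.
Open Scope R_scope.

Section SumList.
Variable A : Type.

Lemma sum_list_ext_in (l : list A) (p q : A -> R) :
  (forall y, In y l -> p y = q y) -> sum_list l p = sum_list l q.
Proof.
  induction l as [|a l IH]; intros H; simpl; [reflexivity|].
  rewrite H, IH; auto with datatypes.
Qed.

Lemma sum_list_lincomb (l : list A) (p q : A -> R) a b :
  sum_list l (fun y => a * p y + b * q y) = a * sum_list l p + b * sum_list l q.
Proof. induction l as [|y l IH]; simpl; [ring|]. rewrite IH; ring. Qed.

Lemma sum_list_scale (l : list A) (p : A -> R) a :
  sum_list l (fun y => a * p y) = a * sum_list l p.
Proof. induction l as [|y l IH]; simpl; [ring|]. rewrite IH; ring. Qed.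

Lemma sum_list_const0 (l : list A) (p : A -> R) :
  (forall y, In y l -> p y = 0) -> sum_list l p = 0.
Proof.
  induction l as [|a l IH]; intros H; simpl; [reflexivity|].
  rewrite H, IH; auto with datatypes; ring.
Qed.

Lemma sum_list_nonneg (l : list A) (p : A -> R) :
  (forall y, In y l -> 0 <= p y) -> 0 <= sum_list l p.
Proof.
  induction l as [|a l IH]; intros H; simpl; [lra|].
  assert (0 <= p a) by auto with datatypes.
  assert (0 <= sum_list l p) by auto with datatypes.
  lra.
Qed.

Lemma sum_list_pos (l : list A) (p : A -> R) y0 :
  (forall y, In y l -> 0 <= p y) -> In y0 l -> 0 < p y0 -> 0 < sum_list l p.
Proof.
  induction l as [|a l IH]; intros H Hin Hp; simpl in *; [contradiction|].
  assert (0 <= p a) by auto.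
  assert (0 <= sum_list l p) by (apply sum_list_nonneg; auto).
  destruct Hin as [<-|Hin]; [lra|].
  assert (0 < sum_list l p) by auto.
  lra.
Qed.

End SumList.

Section Calculus.
Variable G : wgraph.

Lemma vertex_eq_dec (u v : G) : {u = v} + {u <> v}.
Proof.
  destruct (Nat.eq_dec (enc G u) (enc G v)) as [e|n].
  - left; apply enc_inj, e.
  - right; intros ->; auto.
Qed.

Lemma m_neq0 (y : G) : m G y <> 0.
Proof. apply Rgt_not_eq, m_pos. Qed.

Lemma Lap_ext (F F' : G -> R) x :
  (forall u, F u = F' u) -> Lap G F x = Lap G F' x.
Proof.
  intros H; unfold Lap; rewrite H.
  f_equal; apply sum_list_ext_in; intros; rewrite H; reflexivity.
Qed.

Lemma Lap_lincomb (F f g : G -> R) a x :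
  (forall y, F y = f y + a * g y) -> Lap G F x = Lap G f x + a * Lap G g x.
Proof.
  intros H; unfold Lap.
  rewrite (sum_list_ext_in _ _ _
    (fun y => 1 * (w G x y * (f y - f x)) + a * (w G x y * (g y - g x)))).
  - rewrite sum_list_lincomb; ring.
  - intros; rewrite !H; ring.
Qed.

Lemma Lap_at_zero (h : G -> R) x :
  h x = 0 -> Lap G h x = / m G x * sum_list (nbrs G x) (fun y => w G x y * h y).
Proof.
  intros Hx; unfold Lap; rewrite Hx.
  f_equal; apply sum_list_ext_in; intros; ring.
Qed.

Lemma Gam_sym (f g : G -> R) x : Gam G f g x = Gam G g f x.
Proof.
  unfold Gam; rewrite (Lap_ext (fun y => f y * g y) (fun y => g y * f y)).
  - ring.
  - intros; ring.
Qed.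

Lemma Gam_lincomb_l (F f1 f2 g : G -> R) a x :
  (forall y, F y = f1 y + a * f2 y) -> Gam G F g x = Gam G f1 g x + a * Gam G f2 g x.
Proof.
  intros H; unfold Gam.
  rewrite (Lap_lincomb (fun y => F y * g y) (fun y => f1 y * g y) (fun y => f2 y * g y) a)
    by (intros; rewrite H; ring).
  rewrite (Lap_lincomb F f1 f2 a), H by auto.
  ring.
Qed.

Lemma Gam_lincomb_r (F f1 f2 g : G -> R) a x :
  (forall y, F y = f1 y + a * f2 y) -> Gam G g F x = Gam G g f1 x + a * Gam G g f2 x.
Proof.
  intros H; rewrite !(Gam_sym g); apply Gam_lincomb_l, H.
Qed.

Lemma Gam2_sym (f g : G -> R) x : Gam2 G f g x = Gam2 G g f x.
Proof.
  unfold Gam2; rewrite (Lap_ext (Gam G f g) (Gam G g f)).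
  - ring.
  - intros; apply Gam_sym.
Qed.

Lemma Gam2_lincomb_l (F f1 f2 g : G -> R) a x :
  (forall y, F y = f1 y + a * f2 y) -> Gam2 G F g x = Gam2 G f1 g x + a * Gam2 G f2 g x.
Proof.
  intros H; unfold Gam2.
  rewrite (Lap_lincomb (Gam G F g) (Gam G f1 g) (Gam G f2 g) a)
    by (intros; apply Gam_lincomb_l, H).
  rewrite (Gam_lincomb_l F f1 f2 (Lap G g) a) by exact H.
  rewrite (Gam_lincomb_r (Lap G F) (Lap G f1) (Lap G f2) g a)
    by (intros; apply Lap_lincomb, H).
  ring.
Qed.

Lemma Gam2_diag_add_scale (f g : G -> R) r x :
  Gam2_diag G (fun y => f y + r * g y) x =
    Gam2_diag G f x + 2 * r * Gam2 G f g x + r ^ 2 * Gam2_diag G g x.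
Proof.
  set (h := fun y => f y + r * g y).
  assert (Hh : forall y, h y = f y + r * g y) by reflexivity.
  unfold Gam2_diag.
  rewrite (Gam2_lincomb_l h f g h r x Hh), (Gam2_sym f h), (Gam2_sym g h).
  rewrite (Gam2_lincomb_l h f g f r x Hh), (Gam2_lincomb_l h f g g r x Hh).
  rewrite (Gam2_sym g f).
  ring.
Qed.

Section VanishingOnBall.
Variables (g : G -> R) (x : G).
Hypothesis g_x : g x = 0.
Hypothesis g_nbrs : forall y, In y (nbrs G x) -> g y = 0.

Lemma Lap_vanish_ball : Lap G g x = 0.
Proof.
  rewrite Lap_at_zero by exact g_x.
  rewrite sum_list_const0; [ring|].
  intros y Hy; rewrite g_nbrs by exact Hy; ring.
Qed.

Lemma Gam_vanish_ball (h : G -> R) : Gam G g h x = 0.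
Proof.
  unfold Gam; rewrite g_x, Lap_vanish_ball.
  rewrite (Lap_at_zero (fun y => g y * h y)) by (rewrite g_x; ring).
  rewrite sum_list_const0; [ring|].
  intros y Hy; rewrite g_nbrs by exact Hy; ring.
Qed.

End VanishingOnBall.

Lemma indic_self (z : G) : indic G z z = 1.
Proof. unfold indic; destruct Nat.eq_dec; congruence. Qed.

Lemma indic_other (z u : G) : u <> z -> indic G z u = 0.
Proof.
  unfold indic; destruct Nat.eq_dec as [e|]; [|reflexivity].
  intros Hu; elim Hu; apply enc_inj, e.
Qed.

Lemma sum_list_mul_indic_notin (z : G) (l : list G) (c : G -> R) :
  ~ In z l -> sum_list l (fun u => c u * indic G z u) = 0.
Proof.
  intros Hz; apply sum_list_const0; intros u Hu.
  rewrite indic_other; [ring|]; intros ->; contradiction.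
Qed.

Lemma sum_list_mul_indic_in (z : G) (l : list G) (c : G -> R) :
  NoDup l -> In z l -> sum_list l (fun u => c u * indic G z u) = c z.
Proof.
  induction l as [|a l IH]; intros Hnd Hz; simpl; [contradiction|].
  inversion Hnd as [|? ? Ha Hl]; subst.
  destruct Hz as [<-|Hz].
  - rewrite indic_self, sum_list_mul_indic_notin by exact Ha; ring.
  - rewrite indic_other, IH by (auto; intros ->; contradiction); ring.
Qed.

Lemma sum_nbrs_w_indic (z y : G) (d : G -> R) :
  sum_list (nbrs G y) (fun u => w G y u * d u * indic G z u) = w G y z * d z.
Proof.
  destruct (in_dec vertex_eq_dec z (nbrs G y)) as [Hin|Hn].
  - apply (sum_list_mul_indic_in z _ (fun u => w G y u * d u)); [apply nbrs_nodup|exact Hin].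
  - rewrite (sum_list_mul_indic_notin z _ (fun u => w G y u * d u)) by exact Hn.
    assert (w G y z = 0) as ->; [|ring].
    pose proof (w_nonneg G y z); rewrite nbrs_spec in Hn; lra.
Qed.

Lemma Lap_mul_indic (z : G) (d : G -> R) y :
  y <> z -> Lap G (fun u => d u * indic G z u) y = w G y z * d z / m G y.
Proof.
  intros Hy; rewrite Lap_at_zero by (rewrite indic_other; [ring|exact Hy]).
  rewrite (sum_list_ext_in _ _ _ (fun u => w G y u * d u * indic G z u)) by (intros; ring).
  rewrite sum_nbrs_w_indic; unfold Rdiv; ring.
Qed.

Lemma Lap_indic (z y : G) : y <> z -> Lap G (indic G z) y = w G y z / m G y.
Proof.
  intros Hy; rewrite (Lap_ext _ (fun u => 1 * indic G z u)) by (intros; ring).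
  rewrite Lap_mul_indic by exact Hy; unfold Rdiv; ring.
Qed.

End Calculus.

Section DistanceTwo.
Variables (G : wgraph) (x z : G) (f : G -> R).
Hypothesis x_neq_z : x <> z.
Hypothesis nbrs_neq_z : forall y, In y (nbrs G x) -> y <> z.

Let g := indic G z.
Let wpath (y : G) := w G x y * w G y z / m G y.
Let S := sum_list (nbrs G x) wpath.
Let T := sum_list (nbrs G x) (fun y => f y * w G x y * w G y z / m G y).

Lemma indic_off_ball : g x = 0 /\ forall y, In y (nbrs G x) -> g y = 0.
Proof.
  split; [|intros y Hy]; apply indic_other; auto.
Qed.

Lemma Lap_two_step (h : G -> R) (c : G -> R) :
  h x = 0 -> (forall y, In y (nbrs G x) -> h y = c y * (w G y z / m G y)) ->
  Lap G h x = / m G x * sum_list (nbrs G x) (fun y => c y * wpath y).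
Proof.
  intros Hx Hy; rewrite Lap_at_zero by exact Hx.
  f_equal; apply sum_list_ext_in; intros y Hin.
  rewrite Hy by exact Hin; unfold wpath; field; apply m_neq0.
Qed.

Lemma Gam2_diag_indic_dist2 : Gam2_diag G g x = / 4 * / m G x * S.
Proof.
  destruct indic_off_ball as [g_x g_nbrs].
  unfold Gam2_diag, Gam2; rewrite !(Gam_vanish_ball G g x g_x g_nbrs).
  rewrite (Lap_two_step _ (fun _ => / 2)).
  - rewrite sum_list_scale; fold S; field; apply m_neq0.
  - apply Gam_vanish_ball; assumption.
  - intros y Hy; unfold Gam, g.
    rewrite (Lap_mul_indic G z (indic G z) y), indic_self, indic_other by auto.
    unfold Rdiv; ring.
Qed.

Lemma Gam2_indic_cross_dist2 : Gam2 G f g x = / 4 * / m G x * ((f x + f z) * S - 2 * T).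
Proof.
  destruct indic_off_ball as [g_x g_nbrs].
  assert (Lap_g_x : Lap G g x = 0) by (apply Lap_vanish_ball; assumption).
  assert (Lap_g_nbrs : forall y, In y (nbrs G x) -> Lap G g y = w G y z / m G y)
    by (intros; apply Lap_indic; auto).
  assert (Lap_Gam_fg : Lap G (Gam G f g) x =
            / m G x * sum_list (nbrs G x) (fun y => / 2 * (f z - f y) * wpath y)).
  { apply Lap_two_step.
    - rewrite Gam_sym; apply Gam_vanish_ball; assumption.
    - intros y Hy; unfold Gam.
      rewrite Lap_g_nbrs, g_nbrs by exact Hy.
      unfold g; rewrite Lap_mul_indic by auto; field; apply m_neq0. }
  assert (Lap_Lap_g : Lap G (Lap G g) x = / m G x * S).
  { rewrite (Lap_two_step _ (fun _ => 1)) by (auto; intros; rewrite Lap_g_nbrs by auto; ring).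
    rewrite sum_list_scale; fold S; ring. }
  assert (Lap_f_Lap_g : Lap G (fun y => f y * Lap G g y) x = / m G x * T).
  { rewrite (Lap_two_step _ f); [|rewrite Lap_g_x; ring|].
    - f_equal; apply sum_list_ext_in; intros; unfold wpath, Rdiv; ring.
    - intros y Hy; rewrite Lap_g_nbrs by exact Hy; reflexivity. }
  unfold Gam2; rewrite (Gam_vanish_ball G g x g_x g_nbrs), Lap_Gam_fg.
  unfold Gam at 1; rewrite Lap_g_x, Lap_Lap_g, Lap_f_Lap_g.
  rewrite (sum_list_ext_in _ _ _
    (fun y => / 2 * f z * wpath y + (- / 2) * (f y * w G x y * w G y z / m G y)))
    by (intros; unfold wpath, Rdiv; ring).
  rewrite sum_list_lincomb; fold S T; field; apply m_neq0.
Qed.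

Lemma wpath_sum_pos : walk G x z 2 -> 0 < S.
Proof.
  intros Hw.
  inversion Hw as [|? y ? ? Hxy Hyz]; subst.
  inversion Hyz as [|? ? ? ? Hyz' Hzz]; subst.
  inversion Hzz; subst.
  unfold adj in *.
  apply sum_list_pos with y.
  - intros u _; unfold wpath.
    pose proof (w_nonneg G x u); pose proof (w_nonneg G u z); pose proof (m_pos G u).
    apply Rmult_le_pos; [apply Rmult_le_pos; lra|].
    apply Rlt_le, Rinv_0_lt_compat; lra.
  - apply nbrs_spec, Hxy.
  - unfold wpath; pose proof (m_pos G y).
    apply Rdiv_lt_0_compat; [apply Rmult_lt_0_compat|]; assumption.
Qed.

End DistanceTwo.

Lemma sum_common_nbrs (G : wgraph) (x z : G) (h : G -> R) :
  (forall y, w G y z = 0 -> h y = 0) -> sum_common G x z h = sum_list (nbrs G x) h.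
Proof.
  intros Hh; unfold sum_common; apply sum_list_ext_in; intros y _.
  destruct Rlt_dec as [|Hn]; [reflexivity|].
  symmetry; apply Hh; pose proof (w_nonneg G y z); lra.
Qed.

Lemma dist2_neq (G : wgraph) (x z : G) : dist_eq G x z 2 -> x <> z.
Proof. intros [_ Hmin] ->; apply (Hmin 0%nat); [auto|constructor]. Qed.

Lemma dist2_nbrs_neq (G : wgraph) (x z y : G) :
  dist_eq G x z 2 -> In y (nbrs G x) -> y <> z.
Proof.
  intros [_ Hmin] Hy ->; apply (Hmin 1%nat); [auto|].
  apply walk_cons with z; [apply nbrs_spec, Hy|constructor].
Qed.

Theorem lemma3 (G : wgraph) (x z : G) (f : G -> R) :
  dist_eq G x z 2 ->
  (f x + f z) / 2 =
    sum_common G x z (fun y => f y * w G x y * w G y z / m G y) /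
    sum_common G x z (fun y => w G x y * w G y z / m G y) ->
  forall r : R, r <> 0 ->
    Gam2_diag G f x < Gam2_diag G (fun y => f y + r * indic G z y) x.
Proof.
  intros Hd Hq r Hr.
  pose proof (dist2_neq G x z Hd) as Hxz.
  pose proof (fun y => dist2_nbrs_neq G x z y Hd) as Hnz.
  pose proof (wpath_sum_pos G x z (proj1 Hd)) as HS.
  rewrite !sum_common_nbrs in Hq by (intros y ->; unfold Rdiv; ring).
  set (S := sum_list (nbrs G x) (fun y => w G x y * w G y z / m G y)) in *.
  set (T := sum_list (nbrs G x) (fun y => f y * w G x y * w G y z / m G y)) in *.
  assert (Hbal : (f x + f z) * S - 2 * T = 0).
  { replace (f x + f z) with (2 * ((f x + f z) / 2)) by field.
    rewrite Hq; field; apply Rgt_not_eq, HS. }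
  rewrite Gam2_diag_add_scale, Gam2_indic_cross_dist2, Gam2_diag_indic_dist2 by assumption.
  fold S T; rewrite Hbal.
  assert (0 < / 4 * / m G x * S).
  { apply Rmult_lt_0_compat; [apply Rmult_lt_0_compat|exact HS].
    - lra.
    - apply Rinv_0_lt_compat, m_pos. }
  assert (0 < r ^ 2) by (simpl; rewrite Rmult_1_r; apply Rsqr_pos_lt, Hr).
  nra.
Qed.
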